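(* Let $L$ be a metric flag triangulation of $\mathbb{S}^2$ which is not the boundary of a $3$-simplex, and let $s$ be a Euclidean vertex of $L$. (a) If $s$ is $3$-Euclidean, then the link $L_s$ and the star $\mathrm{St}_L(s)$ are full subcomplexes of $L$. (b) If $s$ is $4$-Euclidean and $L$ is not the suspension of a $3$-gon, then $L_s$ and $\mathrm{St}_L(s)$ are full subcomplexes of $L$.
   Context: A simplicial complex with edges labeled by integers $\ge 2$ is metric flag if it is the labeled nerve of a Coxeter system $(W,S)$: the vertex set is $S$, a nonempty subset $T\subseteq S$ spans a simplex iff the subgroup $W_T$ generated by $T$ is finite, and the edge $\{s,t\}$ is labeled $m_{st}$ (the order of $st$). A subcomplex is full if every simplex of $L$ whose vertices lie in the subcomplex belongs to it. For a vertex $s$: the star $\mathrm{St}_L(s)$ is the subcomplex of all closed simplices containing $s$; the link $L_s$ is the subcomplex of all closed simplices contained in simplices containing $s$ but not containing $s$; the valence of $s$ is the number of vertices of $L_s$. A vertex $s$ is $3$-Euclidean if it has valence $3$ and its link vertices $s_0,s_1,s_2$ satisfy $\pi/m_{s_0s_1}+\pi/m_{s_1s_2}+\pi/m_{s_2s_0}=\pi$; it is $4$-Euclidean if it has valence $4$ and its link is a $4$-cycle $s_0s_1s_2s_3$ with $m_{s_is_{i+1}}=2$ for all $i$ (mod $4$); it is Euclidean if it is $3$- or $4$-Euclidean. $L$ is the suspension of an $n$-gon if it is the simplicial join of two non-adjacent vertices (the suspension points) with an $n$-cycle. *)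

From HB Require Import structures.
From mathcomp Require Import all_boot all_order all_algebra.
Set Implicit Arguments. Unset Strict Implicit. Unset Printing Implicit Defensive.
Import GRing.Theory Num.Theory.

Section Defs.
Variable S : finType.

(* A Coxeter matrix on S; the value 0 encodes m_st = infinity. *)
Definition coxeter_matrix (M : S -> S -> nat) : Prop :=
  (forall s, M s s = 1%N) /\
  (forall s t, M s t = M t s) /\
  (forall s t, s != t -> M s t != 1%N).

(* Equality in the Coxeter group W = < S | (st)^{m_st} = 1 > on words over S:
   the congruence on seq S generated by the defining relations. *)
Inductive cox_eq (M : S -> S -> nat) : seq S -> seq S -> Prop :=
| cox_refl w : cox_eq M w w
| cox_sym u v : cox_eq M u v -> cox_eq M v u
| cox_trans u v w : cox_eq M u v -> cox_eq M v w -> cox_eq M u w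
| cox_ctx a u v b : cox_eq M u v -> cox_eq M (a ++ u ++ b) (a ++ v ++ b)
| cox_rel s t : M s t != 0%N ->
    cox_eq M (flatten (nseq (M s t) [:: s; t])) [::].

Definition WT_finite (M : S -> S -> nat) (T : {set S}) : Prop :=
  exists ws : seq (seq S),
    forall w : seq S, all (fun x => x \in T) w ->
      exists2 u, u \in ws & cox_eq M w u.

(* L (a set of simplices = nonempty vertex sets) is the nerve of (W,S);
   its edges {s,t} are labeled by M s t. *)
Definition is_nerve (M : S -> S -> nat) (L : {set {set S}}) : Prop :=
  forall T : {set S}, T \in L <-> (T != set0 /\ WT_finite M T).

Definition cvertices (K : {set {set S}}) : {set S} := [set v | [set v] \in K].

Definition full (L K : {set {set S}}) : Prop :=
  forall sigma, sigma \in L -> sigma \subset cvertices K -> sigma \in K.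

Definition star (L : {set {set S}}) (s : S) : {set {set S}} :=
  [set sigma in L | [exists tau in L, (s \in tau) && (sigma \subset tau)]].

Definition link (L : {set {set S}}) (s : S) : {set {set S}} :=
  [set sigma in L | (s \notin sigma) &&
                    [exists tau in L, (s \in tau) && (sigma \subset tau)]].

Definition valence (L : {set {set S}}) (s : S) : nat := #|cvertices (link L s)|.

Definition cycle_cx n (c : 'I_n -> S) : {set {set S}} :=
  [set [set c i] | i : 'I_n] :|: [set [set c i; c (ordS i)] | i : 'I_n].

Definition is_cycle_cx (K : {set {set S}}) : Prop :=
  exists n (c : 'I_n -> S), (3 <= n)%N /\ injective c /\ K = cycle_cx c.

(* pi/m with m = 0 encoding infinity (pi/infinity = 0), measured in units of pi *)
Definition piover (m : nat) : rat := ((m%:R)^-1)%R.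

Definition three_euclidean (M : S -> S -> nat) (L : {set {set S}}) (s : S) : Prop :=
  valence L s = 3%N /\
  exists s0 s1 s2, cvertices (link L s) = [set s0; s1; s2] /\
    (piover (M s0 s1) + piover (M s1 s2) + piover (M s2 s0) = 1)%R.

Definition four_euclidean (M : S -> S -> nat) (L : {set {set S}}) (s : S) : Prop :=
  valence L s = 4%N /\
  exists s0 s1 s2 s3, uniq [:: s0; s1; s2; s3] /\
    link L s = [set [set s0]; [set s1]; [set s2]; [set s3];
                    [set s0; s1]; [set s1; s2]; [set s2; s3]; [set s3; s0]] /\
    M s0 s1 = 2%N /\ M s1 s2 = 2%N /\ M s2 s3 = 2%N /\ M s3 s0 = 2%N.

Definition euclidean M L s : Prop := three_euclidean M L s \/ four_euclidean M L s.

(* L is the suspension (join with two non-adjacent vertices a, b) of an n-cycle *)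
Definition is_suspension_ngon (n : nat) (L : {set {set S}}) : Prop :=
  exists (a b : S) (c : 'I_n -> S),
    injective c /\ a != b /\ (forall i, c i != a) /\ (forall i, c i != b) /\
    L = [set [set a]; [set b]] :|: cycle_cx c
        :|: [set a |: sigma | sigma in cycle_cx c]
        :|: [set b |: sigma | sigma in cycle_cx c].

Definition is_boundary_3simplex (L : {set {set S}}) : Prop :=
  #|S| = 4%N /\ L = [set sigma : {set S} | (sigma != set0) && (sigma != setT)].

(* Combinatorial triangulation of the 2-sphere: a simplicial complex with
   vertex set S that is a closed combinatorial surface (every vertex link is a
   cycle), connected, with Euler characteristic 2. *)
Definition tri_S2 (L : {set {set S}}) : Prop :=
  (forall sigma, sigma \in L -> sigma != set0) /\
  (forall sigma tau : {set S}, sigma \in L -> tau \subset sigma -> tau != set0 -> tau \in L) /\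
  (forall v : S, [set v] \in L) /\
  (forall v : S, is_cycle_cx (link L v)) /\
  (forall x y : S, connect [rel u w | [set u; w] \in L] x y) /\
  (#|[set sigma in L | #|sigma| == 1%N]| + #|[set sigma in L | #|sigma| == 3%N]|
     = #|[set sigma in L | #|sigma| == 2%N]| + 2)%N.

End Defs.

(* Every vertex link of L is a cycle and L is connected, so a nonempty family
   of triangles of L in which each edge of a triangle lies in a second triangle
   of the family contains all triangles of L, and L consists of their faces.
   (a) If s has valence 3, a simplex on the link vertices that is not in the
   link is the whole triangle spanned by them; with the three triangles at s it
   closes up a tetrahedron, so L would be the boundary of a 3-simplex.  So neither diagonal is an edge,
   and every simplex on the link vertices lies in a side of the square.
   Fullness of the star follows from fullness of the link. *)

From mathcomp Require Import all_boot all_order all_algebra.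
Set Implicit Arguments. Unset Strict Implicit. Unset Printing Implicit Defensive.

Lemma val_iter_ordS n (i : 'I_n) k : val (iter k (@ordS n) i) = (i + k) %% n.
Proof.
elim: k => [|k IHk] /=; first by rewrite addn0 modn_small.
by rewrite IHk -addn1 modnDml -addnA addn1.
Qed.

Lemma iter_ordS_neq n (i : 'I_n) k : 0 < k < n -> iter k (@ordS n) i != i.
Proof.
case/andP=> k_gt0 k_lt; apply/eqP=> /(congr1 val); rewrite val_iter_ordS.
rewrite -[X in _ = X](modn_small (ltn_ord i)) -[X in _ = X %% n]addn0 => /eqP.
by rewrite eqn_modDl mod0n modn_small // => /eqP k0; rewrite k0 in k_gt0.
Qed.

Lemma ordS_neq n (i : 'I_n) : 1 < n -> ordS i != i.
Proof. exact: (@iter_ordS_neq n i 1). Qed.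

Lemma ordS2_neq n (i : 'I_n) : 2 < n -> ordS (ordS i) != i.
Proof. exact: (@iter_ordS_neq n i 2). Qed.

Lemma iter_ordS_surj n (i j : 'I_n) : exists k, iter k (@ordS n) i = j.
Proof.
exists (j + n - i); apply: val_inj; rewrite val_iter_ordS addnBA; last first.
  exact: leq_trans (ltnW (ltn_ord i)) (leq_addl _ _).
by rewrite addnC addnK modnDr modn_small.
Qed.

Lemma ord3_adjacent (i j : 'I_3) : i != j -> j = ordS i \/ i = ordS j.
Proof.
by case: i j => [[|[|[|?]]] ?] [[|[|[|?]]] ?] //= _; [left|right|right|left|left|right];
  apply: val_inj.
Qed.

Lemma set2_eq_cases (T : finType) (x y u v : T) : x != y -> [set x; y] = [set u; v] ->
  (x = u /\ y = v) \/ (x = v /\ y = u).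
Proof.
move=> xy E.
have : x \in [set u; v] by rewrite -E !inE eqxx.
have : y \in [set u; v] by rewrite -E !inE eqxx orbT.
rewrite !inE => /orP[]/eqP yu /orP[]/eqP xu; move: xy; rewrite xu yu ?eqxx // => _; by [left|right].
Qed.

Section CycleComplex.
Variables (S : finType) (n : nat) (c : 'I_n -> S).
Hypothesis c_inj : injective c.

Lemma cycle_cx_edge i : [set c i; c (ordS i)] \in cycle_cx c.
Proof. by rewrite inE; apply/orP; right; apply/imsetP; exists i. Qed.

Lemma cycle_cx_vertex i : [set c i] \in cycle_cx c.
Proof. by rewrite inE; apply/orP; left; apply/imsetP; exists i. Qed.

Lemma cycle_cx_sub_edge sigma :
  sigma \in cycle_cx c -> exists i, sigma \subset [set c i; c (ordS i)].
Proof.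
by rewrite inE => /orP[] /imsetP[i _ ->]; exists i; rewrite ?sub1set ?inE ?eqxx.
Qed.

Lemma cycle_cx_neq0 sigma : sigma \in cycle_cx c -> sigma != set0.
Proof.
by rewrite inE => /orP[] /imsetP[i _ ->]; apply/set0Pn; exists (c i); rewrite !inE eqxx.
Qed.

Lemma cycle_cx_edge_face i (tau : {set S}) :
  tau \subset [set c i; c (ordS i)] -> tau != set0 -> tau \in cycle_cx c.
Proof.
move=> sub; rewrite -card_gt0 => tau_gt0; have := subset_leq_card sub.
rewrite cards2 leq_eqVlt ltnS => /orP[/eqP tau_e|tau_le1].
  have -> : tau = [set c i; c (ordS i)] by apply/eqP; rewrite eqEcard sub cards2 tau_e leqnn.
  exact: cycle_cx_edge.
have /cards1P[x tau_x] : #|tau| == 1.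
  by rewrite eqn_leq tau_gt0 (leq_trans tau_le1) //; case: (_ != _).
have : x \in [set c i; c (ordS i)] by rewrite -sub1set -tau_x.
by rewrite tau_x => /set2P[]->; apply: cycle_cx_vertex.
Qed.

Lemma cycle_cx_edge_vertex x y : [set x; y] \in cycle_cx c -> exists i, x = c i.
Proof.
rewrite inE => /orP[] /imsetP[i _ /setP/(_ x)]; rewrite !inE eqxx /=.
  by move/esym/eqP; exists i.
by case/esym/orP=> /eqP->; eexists.
Qed.

Lemma cycle_cx_neighbor i y : [set c i; y] \in cycle_cx c -> y != c i ->
  y = c (ordS i) \/ y = c (ord_pred i).
Proof.
move=> + yi; rewrite inE => /orP[] /imsetP[j _ E].
  have yj : y \in [set c j] by rewrite -E !inE eqxx orbT.
  have ij : c i \in [set c j] by rewrite -E !inE eqxx.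
  by move: yi; rewrite (set1P yj) (set1P ij) eqxx.
have iy : c i != y by rewrite eq_sym.
have [[/c_inj -> ->]|[/c_inj -> ->]] := set2_eq_cases iy E; first by left.
by right; rewrite ordSK.
Qed.

Lemma cycle_cx_two_neighbors x y1 y2 y : y1 != y2 ->
  [set x; y1] \in cycle_cx c -> [set x; y2] \in cycle_cx c -> [set x; y] \in cycle_cx c ->
  y1 != x -> y2 != x -> y != x -> y \in [set y1; y2].
Proof.
move=> y12 e1 e2 e y1x y2x yx; have [i xi] := cycle_cx_edge_vertex e1; subst x.
have [h1|h1] := cycle_cx_neighbor e1 y1x; have [h2|h2] := cycle_cx_neighbor e2 y2x;
  try by move: y12; rewrite h1 h2 eqxx.
all: by have [->|->] := cycle_cx_neighbor e yx; rewrite !inE -?h1 -?h2 eqxx ?orbT.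
Qed.

Hypothesis n_gt2 : 2 < n.

Lemma cycle_cx_vertexP x : [set x] \in cycle_cx c -> exists i, x = c i.
Proof.
rewrite inE => /orP[] /imsetP[i _ E]; first by exists i; apply: set1_inj.
have /set1P ci : c i \in [set x] by rewrite E !inE eqxx.
have /set1P cSi : c (ordS i) \in [set x] by rewrite E !inE eqxx orbT.
by have := ordS_neq i (ltnW n_gt2); rewrite (c_inj (etrans cSi (esym ci))) eqxx.
Qed.

Lemma cvertices_cycle_cx : cvertices (cycle_cx c) = [set c i | i in 'I_n].
Proof.
apply/setP=> x; rewrite inE; apply/idP/imsetP=> [/cycle_cx_vertexP[i ->]|[i _ ->]].
  by exists i.
exact: cycle_cx_vertex.
Qed.

Lemma cycle_cx_neighbors_closed (A : {set S}) a0 : a0 \in A ->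
  (forall a, a \in A -> exists b b', [/\ b \in A, b' \in A, b != b', b != a & b' != a]
     /\ [set a; b] \in cycle_cx c /\ [set a; b'] \in cycle_cx c) ->
  forall x, [set x] \in cycle_cx c -> x \in A.
Proof.
move=> a0A Anbr x /cycle_cx_vertexP[j ->].
have [b [_ [_ [ea0 _]]]] := Anbr a0 a0A.
have [i0 a0i0] := cycle_cx_edge_vertex ea0.
have succA i : c i \in A -> c (ordS i) \in A.
  move=> /Anbr[b1 [b2 [[b1A b2A b12 b1i b2i] [e1 e2]]]].
  have [<-|h1] := cycle_cx_neighbor e1 b1i; first by [].
  have [<-|h2] := cycle_cx_neighbor e2 b2i; first by [].
  by rewrite h1 h2 eqxx in b12.
have [k <-] := iter_ordS_surj i0 j.
by elim: k => [|k IHk] /=; [rewrite -a0i0 | apply: succA].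
Qed.

End CycleComplex.

Lemma cycle3_cx_proper (S : finType) (c : 'I_3 -> S) sigma : injective c ->
  sigma != set0 -> sigma \proper cvertices (cycle_cx c) -> sigma \in cycle_cx c.
Proof.
move=> c_inj; rewrite -card_gt0 cvertices_cycle_cx // properEcard.
rewrite card_imset // card_ord => sigma_gt0 /andP[sub_sigma sigma_lt3].
have [/cards1P[x sigmax]|/cards2P[x [y [xy sigmaxy]]]] : #|sigma| == 1 \/ #|sigma| == 2.
  by move: sigma_gt0 sigma_lt3; case: #|sigma| => [|[|[|?]]] //; [left|right].
  rewrite sigmax; have /imsetP[i _ ->] : x \in [set c i | i in 'I_3].
    by rewrite -sub1set -sigmax.
  exact: cycle_cx_vertex.
have /imsetP[i _ xi] : x \in [set c i | i in 'I_3].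
  by apply: (subsetP sub_sigma); rewrite sigmaxy !inE eqxx.
have /imsetP[j _ yj] : y \in [set c i | i in 'I_3].
  by apply: (subsetP sub_sigma); rewrite sigmaxy !inE eqxx orbT.
have ij : i != j by apply: contraNneq xy => ij; rewrite xi yj ij.
rewrite sigmaxy xi yj; have [->|->] := ord3_adjacent ij; first exact: cycle_cx_edge.
by rewrite setUC cycle_cx_edge.
Qed.

Section CoxeterWords.
Variables (S : finType) (M : S -> S -> nat).

Lemma cox_eq_catl a u v : cox_eq M u v -> cox_eq M (a ++ u) (a ++ v).
Proof. by move=> uv; have := cox_ctx a [::] uv; rewrite !cats0. Qed.

Lemma cox_eq_catr u v b : cox_eq M u v -> cox_eq M (u ++ b) (v ++ b).
Proof. exact: (cox_ctx [::] b). Qed.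

Lemma cox_eq_square x : M x x = 1 -> cox_eq M [:: x; x] [::].
Proof. by move=> Mxx; have := @cox_rel _ M x x; rewrite Mxx; apply. Qed.

Lemma cox_eq_swap t x : M t t = 1 -> M x x = 1 -> M t x = 2 ->
  cox_eq M [:: t; x] [:: x; t].
Proof.
move=> Mtt Mxx Mtx; apply: cox_sym.
have txtx : cox_eq M [:: t; x; t; x] [::].
  by have := @cox_rel _ M t x; rewrite Mtx; apply.
apply: (@cox_trans _ _ _ [:: t; t; x; t]).
  by have := cox_eq_catr [:: x; t] (cox_sym (cox_eq_square Mtt)).
apply: (@cox_trans _ _ _ [:: t; t; x; t; x; x]).
  by have := cox_eq_catl [:: t; t; x; t] (cox_sym (cox_eq_square Mxx)).
by have := cox_ctx [:: t] [:: x] txtx.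
Qed.

Lemma cox_eq_commute_word t u : (forall x, x \in u -> cox_eq M [:: t; x] [:: x; t]) ->
  cox_eq M (t :: u) (u ++ [:: t]).
Proof.
elim: u => [|x u IHu] tu /=; first exact: cox_refl.
apply: (@cox_trans _ _ _ (x :: t :: u)).
  by have := cox_eq_catr u (tu x (mem_head _ _)).
by apply: (cox_eq_catl [:: x]); apply: IHu => y yu; apply: tu; rewrite inE yu orbT.
Qed.

Lemma cox_eq_collect t (T : {set S}) w : M t t = 1 ->
  (forall x, x \in T -> cox_eq M [:: t; x] [:: x; t]) ->
  all (fun x => x \in t |: T) w ->
  exists w' (b : bool), all (fun x => x \in T) w' /\ cox_eq M w (w' ++ nseq b t).
Proof.
move=> Mtt tT; elim: w => [|x w IHw] /=.
  by move=> _; exists [::], false; split=> //; apply: cox_refl.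
case/andP=> xtT /IHw[w' [b [w'T ww']]].
have xww' := cox_eq_catl [:: x] ww'.
have [xt|xt] := eqVneq x t; last first.
  exists (x :: w'), b; split; last by [].
  by move: xtT; rewrite /= w'T andbT !inE (negbTE xt).
subst x; have tw' : cox_eq M (t :: w' ++ nseq b t) (w' ++ t :: nseq b t).
  have tw'_pass : cox_eq M (t :: w') (w' ++ [:: t]).
    by apply: cox_eq_commute_word => y yw'; apply: tT; move/allP: w'T; apply.
  by have := cox_eq_catr (nseq b t) tw'_pass; rewrite -catA.
case: b xww' tw' {ww'} => /= xww' tw'; last first.
  by exists w', true; split=> //; apply: cox_trans xww' tw'.
exists w', false; split=> //; rewrite cats0.
apply: cox_trans xww' (cox_trans tw' _).
by have := cox_eq_catl w' (cox_eq_square Mtt); rewrite cats0.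
Qed.

Lemma WT_finite_setU1 t (T : {set S}) : coxeter_matrix M ->
  (forall x, x \in T -> M t x = 2) -> WT_finite M T -> WT_finite M (t |: T).
Proof.
move=> [Mdiag _] MtT [ws Tws].
exists (ws ++ [seq u ++ [:: t] | u <- ws]) => w /(cox_eq_collect (Mdiag t))[].
  by move=> x xT; apply: cox_eq_swap; rewrite ?Mdiag ?MtT.
move=> w' [b [w'T ww']]; have [u uws w'u] := Tws _ w'T.
exists (u ++ nseq b t); last exact: cox_trans ww' (cox_eq_catr _ w'u).
rewrite mem_cat; case: b {ww'} => /=; last by rewrite cats0 uws.
by apply/orP; right; apply/mapP; exists u.
Qed.

Lemma nerve_setU1 (L : {set {set S}}) t T : coxeter_matrix M -> is_nerve M L ->
  T \in L -> (forall x, x \in T -> M t x = 2) -> t |: T \in L.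
Proof.
move=> HM HL TL MtT; apply/HL; split; first by apply/set0Pn; exists t; rewrite setU11.
by apply: WT_finite_setU1 => //; have [] := (HL T).1 TL.
Qed.

End CoxeterWords.

Lemma full_star (S : finType) (L : {set {set S}}) s :
  full L (link L s) -> full L (star L s).
Proof.
move=> link_full sigma sigmaL sub_star; rewrite inE sigmaL /=.
have [s_sigma|s_sigma] := boolP (s \in sigma).
  by apply/exists_inP; exists sigma; rewrite ?s_sigma ?subxx.
suff : sigma \in link L s by rewrite inE => /and3P[_ _].
apply: link_full => //; apply/subsetP=> x x_sigma; have := subsetP sub_star x x_sigma.
rewrite !inE => /andP[xL /exists_inP[tau tauL /andP[s_tau x_tau]]].
have sx : s != x by apply: contraNneq s_sigma => ->.
rewrite xL sx /=.
by apply/exists_inP; exists tau; rewrite ?s_tau.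
Qed.

Lemma card3_set3 (S : finType) (t : {set S}) v a : #|t| = 3 ->
  v \in t -> a \in t -> v != a -> exists b, [/\ b != v, b != a & t = [set v; a; b]].
Proof.
move=> t3 v_t a_t va.
have a_tv : a \in t :\ v by rewrite !inE eq_sym va a_t.
have /cards1P[b tb] : #|t :\ v :\ a| == 1.
  by move: t3; rewrite (cardsD1 v) v_t (cardsD1 a (t :\ v)) a_tv !add1n => -[->].
have : b \in t :\ v :\ a by rewrite tb set11.
rewrite !inE => /and3P[ba bv _]; exists b; split=> //.
by rewrite -(setD1K v_t) -(setD1K a_tv) tb setUA.
Qed.

Section SimplicialComplex.
Variables (S : finType) (L : {set {set S}}).
Hypothesis L_faces :
  forall sigma tau : {set S}, sigma \in L -> tau \subset sigma -> tau != set0 -> tau \in L.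

Lemma mem_link v sigma :
  (sigma \in link L v) = [&& sigma \in L, v \notin sigma & v |: sigma \in L].
Proof.
rewrite inE; apply/and3P/and3P=> [[sigmaL v_sigma /exists_inP[tau tauL /andP[v_tau sub]]]|].
  split=> //; apply: L_faces tauL _ _; first by rewrite subUset sub1set v_tau.
  by apply/set0Pn; exists v; rewrite setU11.
case=> sigmaL v_sigma vsigmaL; split=> //.
by apply/exists_inP; exists (v |: sigma); rewrite ?setU11 ?subsetU1.
Qed.

Lemma link_faces v (sigma tau : {set S}) :
  sigma \in link L v -> tau \subset sigma -> tau != set0 -> tau \in link L v.
Proof.
rewrite !mem_link => /and3P[sigmaL v_sigma vsigmaL] sub tau0.
rewrite (L_faces sigmaL sub tau0) (contra (subsetP sub v) v_sigma) /=.
by apply: L_faces vsigmaL (setUS _ sub) _; apply/set0Pn; exists v; rewrite setU11.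
Qed.

Lemma link_vertex v w : ([set w] \in link L v) = (w != v) && ([set v; w] \in L).
Proof.
rewrite mem_link in_set1 eq_sym; case: (w != v); rewrite /= ?andbF //.
apply/andP/idP=> [[] //|vwL].
split=> //; apply: L_faces vwL _ _; first by rewrite sub1set !inE eqxx orbT.
by apply/set0Pn; exists w; rewrite set11.
Qed.

Lemma link_edge v a b : v != a -> v != b ->
  ([set a; b] \in link L v) = ([set v; a; b] \in L).
Proof.
move=> va vb; rewrite mem_link !inE negb_or va vb /= -setUA.
apply/andP/idP=> [[] //|vabL]; split=> //; apply: L_faces vabL _ _.
  by rewrite subsetU1.
by apply/set0Pn; exists a; rewrite !inE eqxx.
Qed.

End SimplicialComplex.

(* [t :\ x] is the edge of the triangle [t] opposite to [x]. *)
Definition closed_surface (S : finType) (Ts : {set {set S}}) : Prop :=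
  forall t, t \in Ts -> #|t| = 3 /\
    forall x, x \in t -> exists2 t', t' \in Ts & t' != t /\ t :\ x \subset t'.

Definition faces (S : finType) (Ts : {set {set S}}) : {set {set S}} :=
  [set sigma | (sigma != set0) && [exists t in Ts, sigma \subset t]].

Definition surface_neighbors (S : finType) (Ts : {set {set S}}) v : {set S} :=
  [set a | (a != v) && [exists t in Ts, (v \in t) && (a \in t)]].

Section Sphere.
Variables (S : finType) (L : {set {set S}}).
Hypothesis L_S2 : tri_S2 L.

Let L_neq0 : forall sigma, sigma \in L -> sigma != set0 := L_S2.1.
Let L_faces : forall sigma tau : {set S},
  sigma \in L -> tau \subset sigma -> tau != set0 -> tau \in L := L_S2.2.1.
Let L_link : forall v : S, is_cycle_cx (link L v) := L_S2.2.2.2.1.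
Let L_connected : forall x y : S, connect [rel u w | [set u; w] \in L] x y :=
  L_S2.2.2.2.2.1.

Lemma link_two_neighbors v a b1 b2 b : b1 != b2 ->
  [set a; b1] \in link L v -> [set a; b2] \in link L v -> [set a; b] \in link L v ->
  b1 != a -> b2 != a -> b != a -> b \in [set b1; b2].
Proof.
have [n [c [_ [c_inj ->]]]] := L_link v.
exact: cycle_cx_two_neighbors.
Qed.

Lemma link_neighbors_closed v (A : {set S}) a0 : a0 \in A -> v \notin A ->
  (forall a, a \in A -> exists b b', [/\ b \in A, b' \in A, b != b', b != a & b' != a]
     /\ [set v; a; b] \in L /\ [set v; a; b'] \in L) ->
  forall w, [set v; w] \in L -> w != v -> w \in A.
Proof.
move=> a0A vA Anbr w vwL wv; have [n [c [n_gt2 [c_inj Lv]]]] := L_link v.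
have vx x : x \in A -> v != x by apply: contraTneq => <-.
apply: (cycle_cx_neighbors_closed c_inj n_gt2 a0A); last by rewrite -Lv (link_vertex L_faces) wv.
move=> a aA; have [b [b' [[bA b'A bb' ba b'a] [vabL vab'L]]]] := Anbr a aA.
by exists b, b'; rewrite -Lv !(link_edge L_faces) ?vx.
Qed.

Lemma adjacency_closed_setT (V : {set S}) x : x \in V ->
  (forall v w, v \in V -> [set v; w] \in L -> w \in V) -> V = setT.
Proof.
move=> xV Vclosed; apply/setP=> y; rewrite inE; have /connectP[p xp ->] := L_connected x y.
by elim: p x xV xp => //= z p IHp x xV /andP[xz zp]; apply: IHp (Vclosed _ _ xV xz) zp.
Qed.

Lemma simplex_sub_triangle sigma : sigma \in L ->
  exists2 t, t \in L & #|t| = 3 /\ sigma \subset t.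
Proof.
move=> sigmaL; have /set0Pn[v v_sigma] := L_neq0 sigmaL.
have [n [c [n_gt2 [c_inj Lv]]]] := L_link v.
have [i sub_i] : exists i, sigma :\ v \subset [set c i; c (ordS i)].
  have [->|sigmav0] := eqVneq (sigma :\ v) set0.
    by exists (Ordinal (ltnW (ltnW n_gt2))); rewrite sub0set.
  apply: cycle_cx_sub_edge; rewrite -Lv (mem_link L_faces) setD11 setD1K //.
  by rewrite sigmaL (L_faces sigmaL (subD1set _ _)).
set e := [set c i; c (ordS i)].
have : e \in link L v by rewrite Lv cycle_cx_edge.
rewrite (mem_link L_faces) => /and3P[_ v_e veL]; exists (v |: e) => //; split.
  by rewrite cardsU1 v_e cards2 (inj_eq c_inj) eq_sym ordS_neq // ltnW.
by rewrite -(setD1K v_sigma) setUS.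
Qed.

Section ClosedSurface.
Variable Ts : {set {set S}}.
Hypotheses (Ts_sub : Ts \subset L) (Ts_neq0 : Ts != set0) (Ts_closed : closed_surface Ts).

Lemma surface_neighbor_triangles v a : a \in surface_neighbors Ts v ->
  exists b b', [/\ b \in surface_neighbors Ts v, b' \in surface_neighbors Ts v,
                   b != b', b != a & b' != a]
    /\ [set v; a; b] \in Ts /\ [set v; a; b'] \in Ts.
Proof.
rewrite inE => /andP[av /exists_inP[t tTs /andP[v_t a_t]]]; rewrite eq_sym in av.
have [t3 t_flip] := Ts_closed tTs.
have [b [bv ba tE]] := card3_set3 t3 v_t a_t av.
have b_t : b \in t by rewrite tE !inE eqxx orbT.
have [t' t'Ts [t't sub_t']] := t_flip b b_t.
have /andP[v_t' a_t'] : (v \in t') && (a \in t').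
  by rewrite !(subsetP sub_t') // !inE ?v_t ?a_t eq_sym ?bv ?ba.
have [b' [b'v b'a t'E]] := card3_set3 (Ts_closed t'Ts).1 v_t' a_t' av.
exists b, b'; rewrite -tE -t'E; split=> //; split=> //.
- by rewrite inE bv; apply/exists_inP; exists t; rewrite // v_t tE !inE eqxx orbT.
- by rewrite inE b'v; apply/exists_inP; exists t'; rewrite // v_t' t'E !inE eqxx orbT.
- by apply: contraNneq t't => bb'; rewrite tE t'E bb'.
Qed.

Lemma surface_neighbors_edge v w t : t \in Ts -> v \in t ->
  [set v; w] \in L -> w != v -> w \in surface_neighbors Ts v.
Proof.
move=> tTs v_t; have [t3 _] := Ts_closed tTs.
have /set0Pn[a a_tv] : t :\ v != set0.
  by rewrite -card_gt0; move: t3; rewrite (cardsD1 v) v_t add1n => -[->].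
apply: (link_neighbors_closed (a0 := a)).
- by case/setD1P: a_tv => av a_t; rewrite inE av; apply/exists_inP; exists t; rewrite ?v_t.
- by rewrite inE eqxx.
move=> b /surface_neighbor_triangles[b1 [b2 [nbrs [T1 T2]]]].
by exists b1, b2; rewrite !(subsetP Ts_sub).
Qed.

Lemma surface_covers x : exists2 t, t \in Ts & x \in t.
Proof.
pose V := [set y | [exists t in Ts, y \in t]].
suff : x \in V by rewrite inE => /exists_inP[t]; exists t.
have /set0Pn[t0 t0Ts] := Ts_neq0.
have /set0Pn[y0 y0t0] : t0 != set0 by rewrite -card_gt0 (Ts_closed t0Ts).1.
rewrite (@adjacency_closed_setT V y0) ?inE //; first by apply/exists_inP; exists t0.
move=> v w; rewrite !inE => /exists_inP[t tTs v_t] vwL.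
have [-> |wv] := eqVneq w v; first by apply/exists_inP; exists t.
move: (surface_neighbors_edge tTs v_t vwL wv); rewrite inE => /andP[_].
by case/exists_inP=> t' t'Ts /andP[_ w_t']; apply/exists_inP; exists t'.
Qed.

Lemma triangle_in_surface t : t \in L -> #|t| = 3 -> t \in Ts.
Proof.
move=> tL t3; have /card_gt1P[v [a [v_t a_t va]]] : 1 < #|t| by rewrite t3.
have [b [bv ba tE]] := card3_set3 t3 v_t a_t va.
have [t0 t0Ts v_t0] := surface_covers v.
have a_nbr : a \in surface_neighbors Ts v.
  apply: surface_neighbors_edge t0Ts v_t0 _ _; last by rewrite eq_sym.
  apply: L_faces tL _ _; first by rewrite tE subsetUl.
  by apply/set0Pn; exists v; rewrite !inE eqxx.
have [b1 [b2 [[b1v b2v b12 b1a b2a] [T1 T2]]]] := surface_neighbor_triangles a_nbr.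
have vb1 : v != b1 by move: b1v; rewrite inE eq_sym => /andP[].
have vb2 : v != b2 by move: b2v; rewrite inE eq_sym => /andP[].
have vb : v != b by rewrite eq_sym.
have : b \in [set b1; b2].
  apply: (link_two_neighbors (v := v) (a := a) b12); rewrite ?(link_edge L_faces) //.
  - exact: subsetP Ts_sub _ T1.
  - exact: subsetP Ts_sub _ T2.
  - by rewrite -tE.
by rewrite tE !inE => /orP[]/eqP->.
Qed.

Theorem closed_surface_faces : L = faces Ts.
Proof.
apply/setP=> sigma; rewrite inE; apply/idP/andP=> [sigmaL|[sigma0 /exists_inP[t tTs sub]]].
  have [t tL [t3 sub]] := simplex_sub_triangle sigmaL.
  by split; [exact: L_neq0 | apply/exists_inP; exists t; rewrite ?triangle_in_surface].
exact: L_faces (subsetP Ts_sub _ tTs) sub sigma0.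
Qed.

End ClosedSurface.

End Sphere.

Lemma simplex_boundary_closed_surface (S : finType) (V : {set S}) :
  #|V| = 4 -> closed_surface [set V :\ x | x in V].
Proof.
move=> V4 _ /imsetP[y yV ->]; split; first by move: V4; rewrite (cardsD1 y) yV => -[].
move=> x /setD1P[xy xV]; exists (V :\ x); first exact: imset_f.
split; last by apply/subsetP=> z; rewrite !inE => /and3P[-> _ ->].
by apply/eqP=> Vxy; move: (setD11 y V); rewrite -Vxy !inE eq_sym xy yV.
Qed.

Lemma faces_simplex_boundary (S : finType) :
  faces [set [set: S] :\ x | x in [set: S]] = [set sigma | (sigma != set0) && (sigma != setT)].
Proof.
apply/setP=> sigma; rewrite !inE; congr (_ && _).
apply/exists_inP/idP=> [[_ /imsetP[x _ ->] sub]|].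
  by apply/eqP=> sigmaT; move: (subsetP sub x); rewrite sigmaT !inE eqxx => /(_ isT).
rewrite -properT => /properP[_ [x _ x_sigma]]; exists ([set: S] :\ x); first exact: imset_f.
by apply/subsetP=> y y_sigma; rewrite !inE andbT; apply: contraNneq x_sigma => <-.
Qed.

Lemma filled_link_boundary (S : finType) (L : {set {set S}}) s (K : {set S}) :
  tri_S2 L -> #|K| = 3 -> s \notin K -> K \in L ->
  (forall sigma, sigma != set0 -> sigma \proper K -> sigma \in link L s) ->
  is_boundary_3simplex L.
Proof.
move=> L_S2 K3 sK KL K_link; have [_ [L_faces [L_vertex _]]] := L_S2.
pose V := s |: K; have V4 : #|V| = 4 by rewrite cardsU1 sK K3.
pose Ts := [set V :\ x | x in V].
have Ts_sub : Ts \subset L.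
  apply/subsetP=> _ /imsetP[x /setU1P[->|xK] ->]; first by rewrite setU1K.
  have xs : x != s by apply: contraNneq sK => <-.
  have -> : V :\ x = s |: (K :\ x).
    apply/setP=> y; rewrite in_setD1 !in_setU1 in_setD1.
    by case: eqVneq => [->|] /=; rewrite ?(negbTE xs).
  have : K :\ x \in link L s.
    apply: K_link; last exact: properD1.
    by rewrite -card_gt0; move: K3; rewrite (cardsD1 x) xK add1n => -[->].
  by rewrite (mem_link L_faces) => /and3P[].
have Ts0 : Ts != set0 by apply/set0Pn; exists (V :\ s); apply: imset_f; rewrite setU11.
have L_Ts := closed_surface_faces L_S2 Ts_sub Ts0 (simplex_boundary_closed_surface V4).
have VT : V = setT.
  apply/setP=> y; rewrite in_setT; move: (L_vertex y); rewrite L_Ts inE.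
  by case/andP=> _ /exists_inP[_ /imsetP[x _ ->]]; rewrite sub1set => /setD1P[].
by split; [rewrite -cardsT -VT | rewrite L_Ts /Ts VT faces_simplex_boundary].
Qed.

Lemma valence3_link_full (S : finType) (L : {set {set S}}) s :
  tri_S2 L -> ~ is_boundary_3simplex L -> valence L s = 3 -> full L (link L s).
Proof.
move=> L_S2 notB val3; have [L_neq0 [L_faces [_ [L_link _]]]] := L_S2.
have [n [c [n_gt2 [c_inj Ls]]]] := L_link s.
have n3 : n = 3.
  by move: val3; rewrite /valence Ls cvertices_cycle_cx // card_imset // card_ord.
subst n; set K := cvertices (link L s).
have K_link sigma : sigma != set0 -> sigma \proper K -> sigma \in link L s.
  by rewrite /K Ls; apply: cycle3_cx_proper.
move=> sigma sigmaL sub_K; have [sigmaK|sigmaK] := eqVneq sigma K; last first.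
  by apply: K_link; [exact: L_neq0 | rewrite properEneq sigmaK].
case: notB; apply: (filled_link_boundary L_S2 val3 _ _ K_link).
  by rewrite inE (link_vertex L_faces) eqxx.
by move: sigmaL; rewrite sigmaK.
Qed.

Definition suspension_triangles (S : finType) n (a b : S) (c : 'I_n -> S) : {set {set S}} :=
  [set x |: [set c i; c (ordS i)] | x : S in [set a; b], i : 'I_n].

Section Suspension.
Variables (S : finType) (n : nat) (a b : S) (c : 'I_n -> S).
Hypotheses (n_gt2 : 2 < n) (c_inj : injective c) (ab : a != b).
Hypotheses (ca : forall i, c i != a) (cb : forall i, c i != b).

Lemma mem_suspension_triangles x i : x \in [set a; b] ->
  x |: [set c i; c (ordS i)] \in suspension_triangles a b c.
Proof. by move=> x_ab; apply/imset2P; exists x i. Qed.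

Lemma suspension_closed_surface : closed_surface (suspension_triangles a b c).
Proof.
move=> _ /imset2P[x i x_ab _ ->].
have cx j : c j != x by case/set2P: x_ab => ->.
have n_gt1 : 1 < n := ltnW n_gt2.
have cSc j : c (ordS j) != c j by rewrite (inj_eq c_inj) ordS_neq.
have [x' x'_ab xx'] : exists2 x', x' \in [set a; b] & x != x'.
  by case/set2P: x_ab => ->; [exists b | exists a]; rewrite ?set21 ?set22 // eq_sym.
split.
  by rewrite cardsU1 cards2 !inE negb_or !(eq_sym x) !cx eq_sym cSc.
move=> y; rewrite !inE => /or3P[]/eqP->.
- exists (x' |: [set c i; c (ordS i)]); first exact: mem_suspension_triangles.
  split; last by rewrite subDset !subUset !sub1set !inE !eqxx !orbT.
  have x_t : x \in x |: [set c i; c (ordS i)] by rewrite setU11.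
  apply: contraTneq x_t => <-.
  by rewrite !inE !negb_or xx' /= ![x == _]eq_sym !cx.
- exists (x |: [set c (ordS i); c (ordS (ordS i))]); first exact: mem_suspension_triangles.
  split; last by rewrite subDset !subUset !sub1set !inE !eqxx !orbT.
  have ci_t : c i \in x |: [set c i; c (ordS i)] by rewrite !inE eqxx orbT.
  apply: contraTneq ci_t => <-.
  by rewrite !inE !(inj_eq c_inj) !negb_or cx /= eq_sym (ordS_neq _ n_gt1) eq_sym ordS2_neq.
- exists (x |: [set c (ord_pred i); c i]).
    by have := mem_suspension_triangles (ord_pred i) x_ab; rewrite ord_predK.
  split; last by rewrite subDset !subUset !sub1set !inE !eqxx !orbT.
  have cSi_t : c (ordS i) \in x |: [set c i; c (ordS i)] by rewrite !inE eqxx !orbT.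
  apply: contraTneq cSi_t => <-.
  by rewrite !inE !(inj_eq c_inj) !negb_or cx (ordS_neq _ n_gt1) /= -{1}(ord_predK i) ordS2_neq.
Qed.

Lemma faces_suspension : faces (suspension_triangles a b c) =
  [set [set a]; [set b]] :|: cycle_cx c :|: [set a |: sigma | sigma in cycle_cx c]
    :|: [set b |: sigma | sigma in cycle_cx c].
Proof.
have face x i sigma : x \in [set a; b] -> sigma != set0 ->
    sigma \subset x |: [set c i; c (ordS i)] -> sigma \in faces (suspension_triangles a b c).
  move=> x_ab sigma0 sub; rewrite inE sigma0; apply/exists_inP.
  by exists (x |: [set c i; c (ordS i)]); rewrite ?mem_suspension_triangles.
apply/setP=> sigma; apply/idP/idP=> [|]; last first.
  have a_ab : a \in [set a; b] by rewrite set21.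
  have b_ab : b \in [set a; b] by rewrite set22.
  have i0 : 'I_n := Ordinal (ltnW (ltnW n_gt2)).
  case/setUP=> [/setUP[/setUP[/set2P[]->|sigmaC]|/imsetP[tau tauC ->]]|/imsetP[tau tauC ->]].
  - by apply: (face a i0) => //; [apply/set0Pn; exists a; rewrite set11 | rewrite sub1set setU11].
  - by apply: (face b i0) => //; [apply/set0Pn; exists b; rewrite set11 | rewrite sub1set setU11].
  - have [i sub] := cycle_cx_sub_edge sigmaC.
    apply: (face a i) => //; first exact: cycle_cx_neq0 sigmaC.
    exact: subset_trans sub (subsetU1 _ _).
  - have [i sub] := cycle_cx_sub_edge tauC.
    by apply: (face a i) => //; [apply/set0Pn; exists a; rewrite setU11 | rewrite setUS].
  - have [i sub] := cycle_cx_sub_edge tauC.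
    by apply: (face b i) => //; [apply/set0Pn; exists b; rewrite setU11 | rewrite setUS].
rewrite inE => /andP[sigma0 /exists_inP[_ /imset2P[x i x_ab _ ->] sub]].
have [x_sigma|x_sigma] := boolP (x \in sigma); last first.
  have sigmaC : sigma \in cycle_cx c.
    apply: (@cycle_cx_edge_face _ _ _ i) sigma0; apply/subsetP=> z z_sigma.
    have /setU1P[zx|//] := subsetP sub z z_sigma.
    by move: x_sigma; rewrite -zx z_sigma.
  by apply/setUP; left; apply/setUP; left; apply/setUP; right.
have tau_sub : sigma :\ x \subset [set c i; c (ordS i)] by rewrite subDset.
rewrite -(setD1K x_sigma); have [->|tau0] := eqVneq (sigma :\ x) set0.
  rewrite setU0; apply/setUP; left; apply/setUP; left; apply/setUP; left.
  by case/set2P: x_ab => ->; rewrite ?set21 ?set22.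
move: (cycle_cx_edge_face tau_sub tau0); case/set2P: x_ab => -> tauC.
  by apply/setUP; left; apply/setUP; right; apply: imset_f.
by apply/setUP; right; apply: imset_f.
Qed.

End Suspension.

Section ThreeCycle.
Variables (S : finType) (x y z : S).

Lemma nth3_vertices (P : S -> Prop) : P x -> P y -> P z ->
  forall i : 'I_3, P (nth x [:: x; y; z] i).
Proof. by move=> Px Py Pz [[|[|[|?]]] ?]. Qed.

Lemma nth3_edges (P : {set S} -> Prop) : P [set x; y] -> P [set y; z] -> P [set z; x] ->
  forall i : 'I_3, P [set nth x [:: x; y; z] i; nth x [:: x; y; z] (ordS i)].
Proof. by move=> Pxy Pyz Pzx [[|[|[|?]]] ?]. Qed.

Lemma nth3_inj : uniq [:: x; y; z] -> injective (fun i : 'I_3 => nth x [:: x; y; z] i).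
Proof. by move=> xyz i j /eqP; rewrite nth_uniq // => /eqP/val_inj. Qed.

End ThreeCycle.

Lemma set1_eq_set2 (S : finType) (x y z : S) : [set x] = [set y; z] -> y = z.
Proof.
move=> E; have /set1P-> : y \in [set x] by rewrite E set21.
by have /set1P-> : z \in [set x] by rewrite E set22.
Qed.

Lemma diagonal_suspension (S : finType) (M : S -> S -> nat) (L : {set {set S}}) s a0 a1 a2 a3 :
  coxeter_matrix M -> is_nerve M L -> tri_S2 L -> uniq [:: s; a0; a1; a2; a3] ->
  [set s; a0; a1] \in L -> [set s; a1; a2] \in L -> [set s; a2; a3] \in L ->
  [set s; a3; a0] \in L ->
  M a0 a1 = 2 -> M a1 a2 = 2 -> M a2 a3 = 2 -> M a3 a0 = 2 ->
  [set a0; a2] \in L -> is_suspension_ngon 3 L.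
Proof.
move=> HM HL L_S2 U s01L s12L s23L s30L M01 M12 M23 M30 a02L.
have [_ [Msym _]] := HM; have [_ [L_faces _]] := L_S2.
move: U; rewrite /= !inE !negb_or -!andbA.
case/and5P=> sa0 sa1 sa2 sa3 /and5P[a01 a02 a03 a12 /and3P[a13 a23 _]].
have face3 T x y z : T \in L -> x \in T -> y \in T -> z \in T -> x |: [set y; z] \in L.
  move=> TL xT yT zT; apply: L_faces TL _ _; first by rewrite !subUset !sub1set xT yT zT.
  by apply/set0Pn; exists x; rewrite setU11.
pose c (i : 'I_3) := nth s [:: s; a0; a2] i.
have c_inj : injective c by apply: nth3_inj; rewrite /= !inE !negb_or sa0 sa2 a02.
have c1 : forall i, c i != a1 by apply: (nth3_vertices (P := fun v => v != a1)); rewrite // eq_sym.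
have c3 : forall i, c i != a3 by apply: (nth3_vertices (P := fun v => v != a3)).
pose Ts := suspension_triangles a1 a3 c.
have Ts_sub : Ts \subset L.
  apply/subsetP=> _ /imset2P[x i x13 _ ->]; move: i.
  apply: (nth3_edges (P := fun e => x |: e \in L)); case/set2P: x13 => ->.
  - by apply: face3 s01L _ _ _; rewrite !inE eqxx ?orbT.
  - by apply: face3 s30L _ _ _; rewrite !inE eqxx ?orbT.
  - apply: (nerve_setU1 HM HL a02L) => w /set2P[]->; by [rewrite Msym |].
  - apply: (nerve_setU1 HM HL a02L) => w /set2P[]->; by [rewrite Msym |].
  - by apply: face3 s12L _ _ _; rewrite !inE eqxx ?orbT.
  - by apply: face3 s23L _ _ _; rewrite !inE eqxx ?orbT.
have Ts0 : Ts != set0.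
  apply/set0Pn; exists (a1 |: [set c ord0; c (ordS ord0)]).
  by apply: mem_suspension_triangles; rewrite set21.
have Ts_closed : closed_surface Ts by apply: suspension_closed_surface.
exists a1, a3, c; split=> //; split=> //; split=> //; split=> //.
by rewrite (closed_surface_faces L_S2 Ts_sub Ts0 Ts_closed) faces_suspension.
Qed.

Section FourCycleLink.
Variables (S : finType) (L : {set {set S}}) (s a0 a1 a2 a3 : S).
Hypothesis L_S2 : tri_S2 L.
Hypothesis U : uniq [:: a0; a1; a2; a3].
Hypothesis Ls : link L s = [set [set a0]; [set a1]; [set a2]; [set a3];
                             [set a0; a1]; [set a1; a2]; [set a2; a3]; [set a3; a0]].

Let L_faces : forall sigma tau : {set S},
  sigma \in L -> tau \subset sigma -> tau != set0 -> tau \in L := L_S2.2.1.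

Lemma four_link_edges :
  [/\ [set a0; a1] \in link L s, [set a1; a2] \in link L s,
      [set a2; a3] \in link L s & [set a3; a0] \in link L s].
Proof. by rewrite Ls !inE !eqxx !orbT. Qed.

Lemma four_link_uniq : uniq [:: s; a0; a1; a2; a3].
Proof.
have s_a x : [set x] \in link L s -> s != x.
  by rewrite (link_vertex L_faces) eq_sym => /andP[].
rewrite cons_uniq U andbT !inE !negb_or !s_a //; by rewrite Ls !inE eqxx ?orbT.
Qed.

Lemma four_link_triangles :
  [/\ [set s; a0; a1] \in L, [set s; a1; a2] \in L, [set s; a2; a3] \in L & [set s; a3; a0] \in L].
Proof.
have [e01 e12 e23 e30] := four_link_edges.
move: four_link_uniq; rewrite /= !inE !negb_or -!andbA => /and5P[sa0 sa1 sa2 sa3 _].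
by split; rewrite -(link_edge L_faces).
Qed.

Lemma four_link_vertices x : [set x] \in link L s -> x \in [set a0; a1; a2; a3].
Proof.
rewrite Ls; move: U; rewrite /= !inE !negb_or -!andbA.
move=> /and5P[d01 _ d03 d12 /and3P[_ d23 _]] /orP[/orP[/orP[/orP[/orP[/orP[/orP[]|]|]|]|]|]|] /eqP.
1-4: by move/set1_inj->; rewrite eqxx ?orbT.
all: by move/set1_eq_set2 => E; move: d01 d12 d23 d03; rewrite E eqxx.
Qed.

Lemma four_link_full : [set a0; a2] \notin L -> [set a1; a3] \notin L -> full L (link L s).
Proof.
move=> no02 no13 sigma sigmaL sub.
have [e01 e12 e23 e30] := four_link_edges.
have pair x y : x \in sigma -> y \in sigma -> [set x; y] \in L.
  move=> x_sigma y_sigma; apply: L_faces sigmaL _ _; first by rewrite subUset !sub1set x_sigma.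
  by apply/set0Pn; exists x; rewrite set21.
have leaf x y u v : [set x; y] \in link L s -> u \notin sigma -> v \notin sigma ->
    {subset [set a0; a1; a2; a3] <= [set x; y; u; v]} -> sigma \in link L s.
  move=> e_link nu nv sub4; apply: (link_faces L_faces e_link).
    apply/subsetP=> w w_sigma; have := subsetP sub w w_sigma.
    rewrite inE => /four_link_vertices/sub4; rewrite !inE -!orbA.
    case/or4P=> [->|->|/eqP wu|/eqP wv]; rewrite ?orbT //.
    - by move: nu; rewrite -wu w_sigma.
    - by move: nv; rewrite -wv w_sigma.
  exact: L_S2.1 sigmaL.
have [h0|h0] := boolP (a0 \in sigma); have [h1|h1] := boolP (a1 \in sigma).
- have h2 : a2 \notin sigma by apply: contraNN no02 => /(pair _ _ h0).
  have h3 : a3 \notin sigma by apply: contraNN no13 => /(pair _ _ h1).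
  by apply: (leaf _ _ _ _ e01 h2 h3) => w; rewrite !inE -!orbA => /or4P[]->; rewrite ?orbT.
- have h2 : a2 \notin sigma by apply: contraNN no02 => /(pair _ _ h0).
  by apply: (leaf _ _ _ _ e30 h1 h2) => w; rewrite !inE -!orbA => /or4P[]->; rewrite ?orbT.
- have h3 : a3 \notin sigma by apply: contraNN no13 => /(pair _ _ h1).
  by apply: (leaf _ _ _ _ e12 h0 h3) => w; rewrite !inE -!orbA => /or4P[]->; rewrite ?orbT.
by apply: (leaf _ _ _ _ e23 h0 h1) => w; rewrite !inE -!orbA => /or4P[]->; rewrite ?orbT.
Qed.

End FourCycleLink.

Lemma four_euclidean_link_full (S : finType) (M : S -> S -> nat) (L : {set {set S}}) s :
  coxeter_matrix M -> is_nerve M L -> tri_S2 L -> ~ is_suspension_ngon 3 L ->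
  four_euclidean M L s -> full L (link L s).
Proof.
move=> HM HL L_S2 notS [_ [a0 [a1 [a2 [a3 [U [Ls [M01 [M12 [M23 M30]]]]]]]]]].
have U5 := four_link_uniq L_S2 U Ls.
have U5' : uniq (s :: rot 1 [:: a0; a1; a2; a3]).
  by move: U5; rewrite !(cons_uniq s) mem_rot rot_uniq.
have [t01 t12 t23 t30] := four_link_triangles L_S2 U Ls.
apply: (four_link_full L_S2 U Ls); apply/negP.
  by move/(diagonal_suspension HM HL L_S2 U5 t01 t12 t23 t30 M01 M12 M23 M30).
by move/(diagonal_suspension HM HL L_S2 U5' t12 t23 t30 t01 M12 M23 M30 M01).
Qed.

Theorem mainTheorem3 (S : finType) (M : S -> S -> nat) (L : {set {set S}}) (s : S) :
  coxeter_matrix M -> is_nerve M L ->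
  tri_S2 L -> ~ is_boundary_3simplex L ->
  euclidean M L s ->
  (three_euclidean M L s -> full L (link L s) /\ full L (star L s)) /\
  (four_euclidean M L s -> ~ is_suspension_ngon 3 L ->
     full L (link L s) /\ full L (star L s)).
Proof.
move=> HM HL L_S2 notB _; split=> [[val3 _] | four notS].
  have link_full := valence3_link_full L_S2 notB val3.
  by split; last exact: full_star.
have link_full := four_euclidean_link_full HM HL L_S2 notS four.
by split; last exact: full_star.
Qed.
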